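(* Let $\mathcal{V}$ be a non-trivial quantale, $\mathsf{F}\colon\mathbf{Set}\to\mathbf{Set}$ a functor and $\lambda$ a $\kappa$-ary $\mathcal{V}$-valued predicate lifting for $\mathsf{F}$. The Kantorovich lifting $\mathsf{F}^\lambda$ of $\mathsf{F}$ with respect to $\{\lambda\}$ sends a $\mathcal{V}$-category $(X,a)$ to $(\mathsf{F}X,\mathsf{F}^\lambda a)$ where $\mathsf{F}^\lambda a=\bigwedge_{r\colon(\kappa,1_\kappa)\nrightarrow(X,a)\text{ distributor}}\lambda(r)\multimap\lambda(r)$.
   Context: A quantale $(\mathcal{V},\otimes,k)$ is a complete lattice with commutative monoid structure, each $u\otimes-$ preserving joins, $\hom(u,-)$ its right adjoint; non-trivial: $\bot\ne\top$. $\mathcal{V}$-categories $(X,a)$: $k\le a(x,x)$, $a(x,y)\otimes a(y,z)\le a(x,z)$; $\mathcal{V}$-functors: $a(x,y)\le b(fx,fy)$. $\mathcal{V}$-relations $r\colon X\nrightarrow Y$ are maps $X\times Y\to\mathcal{V}$, composed by $(s\cdot r)(x,z)=\bigvee_y r(x,y)\otimes s(y,z)$; $1_\kappa$ is $k$ on the diagonal and $\bot$ elsewhere. For $r\colon X\nrightarrow Y$, $s\colon X\nrightarrow Z$, $(r\multimap s)(z,y)=\bigwedge_x\hom(s(x,z),r(x,y))$. A distributor $r\colon(\kappa,1_\kappa)\nrightarrow(X,a)$ is a $\mathcal{V}$-relation $r\colon\kappa\nrightarrow X$ with $a\cdot r\le r$. A $\kappa$-ary $\mathcal{V}$-valued predicate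 lifting is a natural transformation $\lambda\colon\mathbf{Set}(-,\mathcal{V}^\kappa)\to\mathbf{Set}(\mathsf{F}-,\mathcal{V})$; identifying $f\colon X\to\mathcal{V}^\kappa$ with the relation $\kappa\nrightarrow X$, $(i,x)\mapsto f(x)(i)$, and maps $\mathsf{F}X\to\mathcal{V}$ with relations $1\nrightarrow\mathsf{F}X$, $\lambda$ maps relations $\kappa\nrightarrow X$ to relations $1\nrightarrow\mathsf{F}X$. The Kantorovich lifting $\mathsf{F}^\lambda$ sends $(X,a)$ to $\mathsf{F}X$ with structure $c(\mathfrak{x},\mathfrak{y})=\bigwedge_f\hom(\lambda_X(f)(\mathfrak{x}),\lambda_X(f)(\mathfrak{y}))$, over all $\mathcal{V}$-functors $f\colon(X,a)\to\mathcal{V}^\kappa$, where $\mathcal{V}^\kappa$ has $[f,g]=\bigwedge_i\hom(f(i),g(i))$. *)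

Set Implicit Arguments.

Record Quantale := {
  qcar :> Type;
  qle : qcar -> qcar -> Prop;
  qsup : (qcar -> Prop) -> qcar;
  qten : qcar -> qcar -> qcar;
  qk : qcar;
  qhom : qcar -> qcar -> qcar;
  qle_refl : forall u, qle u u;
  qle_trans : forall u v w, qle u v -> qle v w -> qle u w;
  qle_antisym : forall u v, qle u v -> qle v u -> u = v;
  qsup_ub : forall (S : qcar -> Prop) x, S x -> qle x (qsup S);
  qsup_least : forall (S : qcar -> Prop) u, (forall x, S x -> qle x u) -> qle (qsup S) u;
  qten_assoc : forall u v w, qten u (qten v w) = qten (qten u v) w;
  qten_comm : forall u v, qten u v = qten v u;
  qten_k : forall u, qten qk u = u;
  qten_sup : forall u (S : qcar -> Prop),
      qten u (qsup S) = qsup (fun w => exists s, S s /\ w = qten u s);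
  qhom_adj : forall u v w, qle (qten u v) w <-> qle v (qhom u w)
}.

Arguments qle {q}. Arguments qsup {q}. Arguments qten {q}. Arguments qk {q}.
Arguments qhom {q}.

Definition qinf {V : Quantale} (S : V -> Prop) : V :=
  qsup (fun v => forall s, S s -> qle v s).
Definition qbot (V : Quantale) : V := qsup (fun _ => False).
Definition qtop (V : Quantale) : V := qsup (fun _ => True).
Definition nontrivial (V : Quantale) : Prop := qbot V <> qtop V.

Record SetFunctor := {
  Fobj :> Type -> Type;
  fmap : forall X Y : Type, (X -> Y) -> Fobj X -> Fobj Y;
  fmap_id : forall X (t : Fobj X), fmap (fun x : X => x) t = t;
  fmap_comp : forall X Y Z (f : X -> Y) (g : Y -> Z) (t : Fobj X),
      fmap (fun x => g (f x)) t = fmap g (fmap f t)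
}.

Definition vrel (V : Quantale) (X Y : Type) := X -> Y -> V.

Definition vrel_comp {V : Quantale} {X Y Z : Type}
  (s : vrel V Y Z) (r : vrel V X Y) : vrel V X Z :=
  fun x z => qsup (fun v => exists y, v = qten (r x y) (s y z)).

Definition vrel_le {V : Quantale} {X Y : Type} (r s : vrel V X Y) : Prop :=
  forall x y, qle (r x y) (s x y).

Definition vrel_lolli {V : Quantale} {X Y Z : Type}
  (r : vrel V X Y) (s : vrel V X Z) : vrel V Z Y :=
  fun z y => qinf (fun v => exists x, v = qhom (s x z) (r x y)).

Definition VCat {V : Quantale} {X : Type} (a : vrel V X X) : Prop :=
  (forall x, qle qk (a x x)) /\
  (forall x y z, qle (qten (a x y) (a y z)) (a x z)).

Definition VFunctor {V : Quantale} {X Y : Type} (a : vrel V X X) (b : vrel V Y Y)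
  (f : X -> Y) : Prop := forall x y, qle (a x y) (b (f x) (f y)).

(** the V-category structure on V^kappa *)
Definition powstr {V : Quantale} (kappa : Type) : vrel V (kappa -> V) (kappa -> V) :=
  fun f g => qinf (fun v => exists i, v = qhom (f i) (g i)).

(** distributor (kappa, 1_kappa) -+-> (X, a) : a . r <= r *)
Definition distributor {V : Quantale} {kappa X : Type}
  (a : vrel V X X) (r : vrel V kappa X) : Prop := vrel_le (vrel_comp a r) r.

(** kappa-ary V-valued predicate liftings: natural transformations
    Set(-, V^kappa) -> Set(F-, V) *)
Definition pred_lifting (V : Quantale) (F : SetFunctor) (kappa : Type)
  (lam : forall X : Type, (X -> kappa -> V) -> F X -> V) : Prop :=
  forall (X Y : Type) (g : Y -> X) (f : X -> kappa -> V) (t : F Y),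
    lam Y (fun y => f (g y)) t = lam X f (fmap F g t).

(** lambda acting on relations kappa -+-> X, giving relations 1 -+-> F X *)
Definition lam_rel {V : Quantale} {F : SetFunctor} {kappa X : Type}
  (lam : forall X : Type, (X -> kappa -> V) -> F X -> V)
  (r : vrel V kappa X) : vrel V unit (F X) :=
  fun _ t => lam X (fun x i => r i x) t.

Definition kantorovich {V : Quantale} {F : SetFunctor} {kappa X : Type}
  (lam : forall X : Type, (X -> kappa -> V) -> F X -> V)
  (a : vrel V X X) : vrel V (F X) (F X) :=
  fun t s => qinf (fun v => exists f : X -> kappa -> V,
      VFunctor a (@powstr V kappa) f /\ v = qhom (lam X f t) (lam X f s)).

(* A distributor r : (kappa, 1_kappa) -+-> (X, a) and a V-functor (X, a) -> V^kappa are
   the same data up to transposition: both conditions say a(x,y) <= hom(r(i,x), r(i,y)),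
   by the adjunction between tensor and hom.  Moreover, since lambda(r) has domain 1,
   (lambda(r) -o lambda(r))(t,s) is just hom(lambda(r)(t), lambda(r)(s)).  Hence the two
   infima range over the same set of values. *)

Section QuantaleInf.

Variable V : Quantale.

Lemma qinf_lb (S : V -> Prop) s : S s -> qle (qinf S) s.
Proof. intro Hs. apply qsup_least. intros x Hx. exact (Hx s Hs). Qed.

Lemma qinf_glb (S : V -> Prop) u : (forall s, S s -> qle u s) -> qle u (qinf S).
Proof. intro Hu. apply qsup_ub. exact Hu. Qed.

Lemma qinf_ext (S T : V -> Prop) : (forall v, S v <-> T v) -> qinf S = qinf T.
Proof.
  intro HST. apply qle_antisym; apply qinf_glb; intros s Hs; apply qinf_lb, HST, Hs.
Qed.

End QuantaleInf.

Lemma vrel_lolli_unit (V : Quantale) (Y Z : Type) (r : vrel V unit Y) (s : vrel V unit Z) z y :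
  vrel_lolli r s z y = qhom (s tt z) (r tt y).
Proof.
  apply qle_antisym.
  - apply qinf_lb. exists tt. reflexivity.
  - apply qinf_glb. intros v [[] ->]. apply qle_refl.
Qed.

Section Transpose.

Variables (V : Quantale) (kappa X : Type) (a : vrel V X X).

Lemma VFunctor_powstrP (f : X -> kappa -> V) :
  VFunctor a (@powstr V kappa) f <->
  (forall x y i, qle (a x y) (qhom (f x i) (f y i))).
Proof.
  split.
  - intros Hf x y i. eapply qle_trans; [apply Hf|].
    apply qinf_lb. exists i. reflexivity.
  - intros Hf x y. apply qinf_glb. intros v [i ->]. apply Hf.
Qed.

Lemma distributorP (r : vrel V kappa X) :
  distributor a r <-> (forall i x y, qle (a x y) (qhom (r i x) (r i y))).
Proof.
  split.
  - intros Hr i x y. apply qhom_adj. eapply qle_trans; [|apply (Hr i y)].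
    apply qsup_ub. exists x. reflexivity.
  - intros Hr i y. apply qsup_least. intros v [x ->]. apply qhom_adj, Hr.
Qed.

Lemma VFunctor_powstr_distributor (f : X -> kappa -> V) :
  VFunctor a (@powstr V kappa) f <-> distributor a (fun i x => f x i).
Proof.
  split.
  - intros Hf. apply distributorP. intros i x y. apply VFunctor_powstrP, Hf.
  - intros Hr. apply VFunctor_powstrP. intros x y i. apply (distributorP (fun i x => f x i)), Hr.
Qed.

End Transpose.

Theorem proposition5 (V : Quantale) (HV : nontrivial V) (F : SetFunctor)
  (kappa : Type) (lam : forall X : Type, (X -> kappa -> V) -> F X -> V)
  (Hlam : @pred_lifting V F kappa lam)
  (X : Type) (a : vrel V X X) (Ha : VCat a) :
  forall t s : F X,
    kantorovich lam a t s =
    qinf (fun v => exists r : vrel V kappa X,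
             distributor a r /\ v = vrel_lolli (lam_rel lam r) (lam_rel lam r) t s).
Proof.
  intros t s. apply qinf_ext. intro v. split.
  - intros [f [Hf ->]]. exists (fun i x => f x i).
    split; [apply VFunctor_powstr_distributor, Hf | symmetry; apply vrel_lolli_unit].
  - intros [r [Hr ->]]. exists (fun x i => r i x).
    split; [apply VFunctor_powstr_distributor, Hr | apply vrel_lolli_unit].
Qed.
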